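(* In the setting of the linkage $\mathcal{L}$, for each case $k\in\{1,2,3\}$ of the classification below there is a planar map $\sigma_k$ of the $xz$-plane with $\sigma_k(A_0)=B_0$ and $\sigma_k(A_j)=B_j$: (1) If $L_j$ satisfies case 1 (i.e. $v_j=v_0=\pm\tfrac{u_0}{t_0}$ and $u_j=\tfrac{u_0t_j}{t_0}$, with $b$ on the compatible branch), then $\sigma_1$ is the central scaling with center $S_2$ mapping $S_1$ to $S_3$. (2) If $L_j$ satisfies case 2 (i.e. $v_0=\mp\tfrac{u_0}{t_0}$, $v_j=\mp\tfrac{u_0(s_0^2-t_0^2)}{t_0(s_j^2-t_j^2)}$, $u_j=\tfrac{\sqrt{t_0v_j(s_j^2t_0v_j\pm s_0^2u_0\mp t_0^2u_0)}}{t_0}$, with $b$ on the compatible branch), then $\sigma_2$ is the perspective collineation with center $S_2$ and axis the line orthogonal to $q$ through the midpoint $M$ of $S_1$ and $S_3$, mapping $S_1$ to $S_3$. (3) If $L_j$ satisfies case 3 (i.e. $v_j=v_0$, $u_j=\sqrt{s_j^2v_0^2-s_0^2v_0^2+u_0^2}$, $t_j=\sqrt{s_j^2-s_0^2+t_0^2}$), then with $\alpha$ and $\beta$ the lines orthogonal to $q$ through $A_0$ and $B_0$ respectively, $A_j\in\alpha$, $B_j\in\beta$, and $\sigma_3$ is the central perspectivity with center $S_2$ mapping points of $\alpha$ to points of $\beta$.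
   Context: Planar linkage $\mathcal{L}$ in the $xz$-plane: the $z$-axis is the line $q$; $S_2=(0,0,0)^T$, $S_1=(0,0,a)^T$ with $a>0$, $S_3=(0,0,b)^T$ with $b\neq0$, sliding along $q$. For each index $i\in\{0,\dots,p\}$ there are points $A_i=(d_i,0,z_i)^T$ and $B_i=v_iA_i$ ($v_i\neq 0$ fixed) with fixed lengths $s_i=\overline{S_2A_i}>0$, $t_i=\overline{S_1A_i}>0$, $u_i=\overline{S_3B_i}>0$, so that $d_i=\frac{\sqrt{2a^2s_i^2+2a^2t_i^2+2s_i^2t_i^2-a^4-s_i^4-t_i^4}}{2a}$, $z_i=\frac{a^2+s_i^2-t_i^2}{2a}$, and $b$ is determined from $\|B_0-S_3\|^2=u_0^2$ (two branches $b_\pm$; in cases 1 and 2 the branch is the one for which the linkage is mobile, depending on the sign of $z_0$ and of $v_0$). A central scaling is a homothety; a perspective collineation of the plane is a projective collineation fixing every point of a line (axis) and every line through a point (center). *)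

(* Points of the xz-plane are pairs (x, z) : R * R. *)
From HB Require Import structures.
From mathcomp Require Import all_boot all_order all_algebra.
Set Implicit Arguments. Unset Strict Implicit. Unset Printing Implicit Defensive.
Import Order.TTheory GRing.Theory Num.Theory.
Local Open Scope ring_scope.

Section Linkage.
Variable R : rcfType.

(* coordinates of A_i = (d_i, 0, z_i) from a = |S2S1|, s = |S2A|, t = |S1A| *)
Definition dcoord (a s t : R) : R :=
  Num.sqrt (2 * a ^+ 2 * s ^+ 2 + 2 * a ^+ 2 * t ^+ 2 + 2 * s ^+ 2 * t ^+ 2
            - a ^+ 4 - s ^+ 4 - t ^+ 4) / (2 * a).
Definition dradicand (a s t : R) : R :=
  2 * a ^+ 2 * s ^+ 2 + 2 * a ^+ 2 * t ^+ 2 + 2 * s ^+ 2 * t ^+ 2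
            - a ^+ 4 - s ^+ 4 - t ^+ 4.
Definition zcoord (a s t : R) : R := (a ^+ 2 + s ^+ 2 - t ^+ 2) / (2 * a).

Definition Apt (a s t : R) : R * R := (dcoord a s t, zcoord a s t).
Definition Bpt (a s t v : R) : R * R := (v * dcoord a s t, v * zcoord a s t).

(* the two roots b_+ (sg = 1) and b_- (sg = -1) of ||B_0 - S_3||^2 = u_0^2 *)
Definition b_branch (a s0 t0 u0 v0 sg : R) : R :=
  v0 * zcoord a s0 t0
  + sg * Num.sqrt (u0 ^+ 2 - v0 ^+ 2 * dcoord a s0 t0 ^+ 2).

Definition homothety (c : R * R) (k : R) (p : R * R) : R * R :=
  (c.1 + k * (p.1 - c.1), c.2 + k * (p.2 - c.2)).

(* projective plane: homogeneous coordinates (x : z : w); lines are covectors *)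
Definition homog (p : R * R) : 'cV[R]_3 := \col_(i < 3) nth 0 [:: p.1; p.2; 1] i.
Definition on_line (l : 'rV[R]_3) (x : 'cV[R]_3) : Prop := (l *m x) 0 0 = 0.
(* the line z = h, i.e. the line orthogonal to q (the z-axis) at height h *)
Definition horiz_line (h : R) : 'rV[R]_3 := \row_(i < 3) nth 0 [:: 0; 1; - h] i.

Definition persp_collineation (M : 'M[R]_3) (C : 'cV[R]_3) (ax : 'rV[R]_3) : Prop :=
  [/\ M \in unitmx,
      (forall x : 'cV[R]_3, x != 0 -> on_line ax x -> exists k : R, M *m x = k *: x)
    & (forall (l : 'rV[R]_3) (x : 'cV[R]_3),
         on_line l C -> on_line l x -> on_line l (M *m x))].

Definition coll_maps (M : 'M[R]_3) (p q : R * R) : Prop :=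
  exists k : R, k != 0 /\ M *m homog p = k *: homog q.

Definition collinear3 (c p q : R * R) : Prop :=
  (p.1 - c.1) * (q.2 - c.2) - (p.2 - c.2) * (q.1 - c.1) = 0.

Definition persp_image (c : R * R) (h1 h2 : R) (p q : R * R) : Prop :=
  [/\ p.2 = h1, q.2 = h2 & collinear3 c p q].

End Linkage.

(* The distance S1A_i = t_i gives
   d_i^2 + (z_i - a)^2 = t_i^2, so when u_0 = |v_0| t_0 the radicand defining b
   is the square of v_0 (z_0 - a) and the two branches are b = v_0 a and
   b = v_0 (2 z_0 - a).  In case 1, b = v_0 a and B_i = v_0 A_i, so the scaling
   by v_0 about S2 does everything.  In case 2, b = v_i (2 z_i - a) for both
   i = 0 and i = j, and (x : z : w) |-> (x : z : (2 z - a w) / b) is a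
   perspective collineation with center S2 and axis z = (a + b) / 2 sending
   every such A_i to v_i A_i.  In case 3, s_j^2 - t_j^2 = s_0^2 - t_0^2 forces
   z_j = z_0, and B_i = v_0 A_i lies on the ray from S2 through A_i. *)
From mathcomp Require Import all_boot all_order all_algebra.
From mathcomp Require Import ring.
Import Order.TTheory GRing.Theory Num.Theory.
Local Open Scope ring_scope.
Set Implicit Arguments. Unset Strict Implicit.

Section Planar.
Variable R : rcfType.
Implicit Types (a s t u v k : R) (p : R * R).

Lemma homothety0E k p : homothety (0, 0) k p = (k * p.1, k * p.2).
Proof. by rewrite /homothety /= !subr0 !add0r. Qed.

Lemma Bpt_homothety a s t v : Bpt a s t v = homothety (0, 0) v (Apt a s t).
Proof. by rewrite homothety0E. Qed.

Lemma collinear3_homothety (c : R * R) k p : collinear3 c p (homothety c k p).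
Proof. by rewrite /collinear3 /homothety /=; ring. Qed.

Lemma dcoord_zcoord_dist a s t : 0 < a -> 0 <= dradicand a s t ->
  dcoord a s t ^+ 2 + (zcoord a s t - a) ^+ 2 = t ^+ 2.
Proof.
move=> a_gt0 hD; have a_neq0 : a != 0 by rewrite gt_eqF.
rewrite /dcoord expr_div_n sqr_sqrtr // /zcoord; field; by rewrite a_neq0.
Qed.

Lemma zcoord_double a s t : 0 < a -> 2 * zcoord a s t - a = (s ^+ 2 - t ^+ 2) / a.
Proof.
move=> a_gt0; have a_neq0 : a != 0 by rewrite gt_eqF.
rewrite /zcoord; field; by rewrite a_neq0.
Qed.

Lemma scaled_zcoord_double_eq a s t v s' t' v' : 0 < a ->
  v' * (s' ^+ 2 - t' ^+ 2) = v * (s ^+ 2 - t ^+ 2) ->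
  v' * (2 * zcoord a s' t' - a) = v * (2 * zcoord a s t - a).
Proof. by move=> a_gt0 e; rewrite !zcoord_double // !mulrA e. Qed.

Lemma zcoord_eq a s t s' t' :
  s ^+ 2 - t ^+ 2 = s' ^+ 2 - t' ^+ 2 -> zcoord a s t = zcoord a s' t'.
Proof.
move=> e; rewrite /zcoord; congr (_ / _).
by rewrite -!addrA -[s ^+ 2 - _]/(s ^+ 2 + - t ^+ 2) e.
Qed.

Lemma sqr_ratio_eq eps u v t : eps ^+ 2 = 1 -> t != 0 -> v = eps * u / t ->
  u ^+ 2 = (v * t) ^+ 2.
Proof. by move=> e2 t_neq0 ->; rewrite mulfVK // exprMn e2 mul1r. Qed.

Section Branches.
Variables (a s t u v : R).
Hypotheses (a_gt0 : 0 < a) (hD : 0 <= dradicand a s t) (hu : u ^+ 2 = (v * t) ^+ 2).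

Let d := dcoord a s t.
Let z := zcoord a s t.

Lemma branch_sqrt : Num.sqrt (u ^+ 2 - v ^+ 2 * d ^+ 2) = `|v * (z - a)|.
Proof.
rewrite -sqrtr_sqr; congr Num.sqrt.
by rewrite hu exprMn -(dcoord_zcoord_dist a_gt0 hD) -/d -/z; ring.
Qed.

Lemma b_branch_scaling : b_branch a s t u v (Num.sg (v * (a - z))) = v * a.
Proof.
rewrite /b_branch -/d -/z branch_sqrt.
have -> : v * (z - a) = - (v * (a - z)) by ring.
by rewrite normrN -numEsg /z; ring.
Qed.

Lemma b_branch_reflection : b_branch a s t u v (Num.sg (v * (z - a))) = v * (2 * z - a).
Proof. by rewrite /b_branch -/d -/z branch_sqrt -numEsg; ring. Qed.

End Branches.

Definition col3 (x0 x1 x2 : R) : 'cV[R]_3 := \col_(i < 3) nth 0 [:: x0; x1; x2] i.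
Definition row3 (x0 x1 x2 : R) : 'rV[R]_3 := \row_(i < 3) nth 0 [:: x0; x1; x2] i.

Lemma col3E (x : 'cV[R]_3) : exists x0 x1 x2, x = col3 x0 x1 x2.
Proof.
exists (x ord0 0), (x (lift ord0 ord0) 0), (x ord_max 0).
apply/matrixP => i j; rewrite !mxE (ord1 j).
by case: i => [[|[|[|//]]] Hi]; congr (x _ _); apply: val_inj.
Qed.

Lemma row3E (l : 'rV[R]_3) : exists l0 l1 l2, l = row3 l0 l1 l2.
Proof.
exists (l 0 ord0), (l 0 (lift ord0 ord0)), (l 0 ord_max).
apply/matrixP => i j; rewrite !mxE (ord1 i).
by case: j => [[|[|[|//]]] Hj]; congr (l _ _); apply: val_inj.
Qed.

Lemma on_line3 l0 l1 l2 x0 x1 x2 :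
  on_line (row3 l0 l1 l2) (col3 x0 x1 x2) <-> l0 * x0 + l1 * x1 + l2 * x2 = 0.
Proof. by rewrite /on_line !mxE !big_ord_recl big_ord0 !mxE /= addr0 addrA. Qed.

Lemma scale_col3 k x0 x1 x2 : k *: col3 x0 x1 x2 = col3 (k * x0) (k * x1) (k * x2).
Proof. by apply/matrixP => i j; rewrite !mxE; case: i => [[|[|[|//]]] Hi]. Qed.

Definition origin_persp_mx (lam mu : R) : 'M[R]_3 :=
  \matrix_(i < 3, j < 3)
    nth 0 (nth [::] [:: [:: 1; 0; 0]; [:: 0; 1; 0]; [:: 0; lam; mu]] i) j.

Lemma origin_persp_mxE lam mu x0 x1 x2 :
  origin_persp_mx lam mu *m col3 x0 x1 x2 = col3 x0 x1 (lam * x1 + mu * x2).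
Proof.
apply/matrixP => i j; rewrite !mxE !big_ord_recl big_ord0 !mxE.
by case: i => [[|[|[|//]]] Hi] /=; ring.
Qed.

Lemma origin_persp_mx_unit lam mu : mu != 0 -> origin_persp_mx lam mu \in unitmx.
Proof.
move=> mu_neq0.
have [] // := @mulmx1_unit _ _ (origin_persp_mx lam mu) (origin_persp_mx (- lam / mu) mu^-1).
apply/matrixP => i j; rewrite !mxE !big_ord_recl big_ord0 !mxE.
case: i => [[|[|[|//]]] Hi]; case: j => [[|[|[|//]]] Hj] /=; by field; rewrite ?mu_neq0.
Qed.

Lemma origin_persp_collineation lam mu h : mu != 0 -> lam * h + mu = 1 ->
  persp_collineation (origin_persp_mx lam mu) (homog (0, 0)) (horiz_line h).
Proof.
move=> mu_neq0 fix_axis; split; first exact: origin_persp_mx_unit.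
- move=> x _; have [x0 [x1 [x2 ->]]] := col3E x.
  rewrite /horiz_line -/(row3 _ _ _) on_line3 origin_persp_mxE => on_axis.
  have -> : x1 = h * x2 by apply/eqP; rewrite -subr_eq0 -on_axis; apply/eqP; ring.
  exists 1; rewrite scale_col3 !mul1r.
  by rewrite mulrA -mulrDl fix_axis mul1r.
- move=> l x; have [l0 [l1 [l2 ->]]] := row3E l; have [x0 [x1 [x2 ->]]] := col3E x.
  rewrite /homog -/(col3 _ _ _) origin_persp_mxE !on_line3 /=.
  have -> : l0 * 0 + l1 * 0 + l2 * 1 = l2 by ring.
  by move=> -> on_l; rewrite -[RHS]on_l; ring.
Qed.

Lemma coll_maps_origin_persp lam mu k p : k * (lam * p.2 + mu) = 1 ->
  coll_maps (origin_persp_mx lam mu) p (homothety (0, 0) k p).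
Proof.
move=> hk; have k_neq0 : k != 0 by apply: contra_eq_neq hk => ->; rewrite mul0r eq_sym oner_eq0.
exists k^-1; split; first by rewrite invr_neq0.
rewrite homothety0E /homog -!/(col3 _ _ _) origin_persp_mxE scale_col3 /=.
by rewrite !mulKf // !mulr1 -[k^-1]mulr1 -hk mulKf.
Qed.

Lemma reflection_persp_collineation a b : a != 0 -> b != 0 ->
  persp_collineation (origin_persp_mx (2 / b) (- a / b)) (homog (0, 0))
    (horiz_line ((a + b) / 2)).
Proof.
move=> a_neq0 b_neq0; apply: origin_persp_collineation.
  by rewrite mulf_neq0 ?oppr_eq0 ?invr_neq0.
by field.
Qed.

Lemma coll_maps_reflection a b k p : b != 0 -> k * (2 * p.2 - a) = b ->
  coll_maps (origin_persp_mx (2 / b) (- a / b)) p (homothety (0, 0) k p).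
Proof.
move=> b_neq0 hk; apply: coll_maps_origin_persp.
have -> : k * (2 / b * p.2 + - a / b) = k * (2 * p.2 - a) / b by field.
by rewrite hk divff.
Qed.

End Planar.

Theorem mainTheorem2 (R : rcfType) (p j : nat) (a b : R) (s t u v : nat -> R) :
  0 < a -> b != 0 -> (0 < j <= p)%N ->
  (forall i, (i <= p)%N ->
     [/\ 0 < s i, 0 < t i, 0 < u i, v i != 0
       & 0 <= dradicand a (s i) (t i)]) ->
  (* ||B_0 - S_3||^2 = u_0^2 *)
  (v 0%N * dcoord a (s 0%N) (t 0%N)) ^+ 2
    + (v 0%N * zcoord a (s 0%N) (t 0%N) - b) ^+ 2 = u 0%N ^+ 2 ->
  let S1 : R * R := (0, a) in
  let S2 : R * R := (0, 0) in
  let S3 : R * R := (0, b) in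
  let A0 := Apt a (s 0%N) (t 0%N) in
  let Aj := Apt a (s j) (t j) in
  let B0 := Bpt a (s 0%N) (t 0%N) (v 0%N) in
  let Bj := Bpt a (s j) (t j) (v j) in
  let z0 := zcoord a (s 0%N) (t 0%N) in
  (* case 1 *)
  ((exists eps : R, [/\ eps ^+ 2 = 1,
       v j = v 0%N, v 0%N = eps * u 0%N / t 0%N,
       u j = u 0%N * t j / t 0%N
     & b = b_branch a (s 0%N) (t 0%N) (u 0%N) (v 0%N)
             (Num.sg (v 0%N * (a - z0)))]) ->
   exists k : R, [/\ homothety S2 k S1 = S3,
                     homothety S2 k A0 = B0 & homothety S2 k Aj = Bj])
  /\
  (* case 2 *)
  ((exists eps : R, [/\ eps ^+ 2 = 1,
       v 0%N = - eps * u 0%N / t 0%N,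
       v j = - eps * u 0%N * (s 0%N ^+ 2 - t 0%N ^+ 2)
               / (t 0%N * (s j ^+ 2 - t j ^+ 2)),
       u j = Num.sqrt (t 0%N * v j * (s j ^+ 2 * t 0%N * v j
               + eps * s 0%N ^+ 2 * u 0%N - eps * t 0%N ^+ 2 * u 0%N)) / t 0%N
     & b = b_branch a (s 0%N) (t 0%N) (u 0%N) (v 0%N)
             (Num.sg (v 0%N * (z0 - a)))]) ->
   exists M : 'M[R]_3,
     [/\ persp_collineation M (homog S2) (horiz_line ((a + b) / 2)),
         coll_maps M S1 S3, coll_maps M A0 B0 & coll_maps M Aj Bj])
  /\
  (* case 3 *)
  ([/\ v j = v 0%N,
       u j = Num.sqrt (s j ^+ 2 * v 0%N ^+ 2 - s 0%N ^+ 2 * v 0%N ^+ 2 + u 0%N ^+ 2)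
     & t j = Num.sqrt (s j ^+ 2 - s 0%N ^+ 2 + t 0%N ^+ 2)] ->
   let alpha := A0.2 in
   let beta := B0.2 in
   [/\ Aj.2 = alpha, Bj.2 = beta,
       persp_image S2 alpha beta A0 B0 & persp_image S2 alpha beta Aj Bj]).
Proof.
move=> a_gt0 b_neq0 /andP[_ jp] hi _; cbv zeta.
have a_neq0 : a != 0 by rewrite gt_eqF.
have [_ t0_gt0 _ v0_neq0 hD0] := hi 0%N isT.
have [_ tj_gt0 _ vj_neq0 _] := hi j jp.
have t0_neq0 : t 0%N != 0 by rewrite gt_eqF.
(* The hypotheses on u_j only express mobility of the linkage; the maps do not need them. *)
split; [|split].
- case=> eps [e2 -> v0E _ ->]; exists (v 0%N).
  have u0E := sqr_ratio_eq e2 t0_neq0 v0E.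
  by rewrite b_branch_scaling // !Bpt_homothety homothety0E mulr0.
- case=> eps [e2 v0E vjE _ bE].
  have u0E : u 0%N ^+ 2 = (v 0%N * t 0%N) ^+ 2.
    by apply: (sqr_ratio_eq (eps := - eps)); rewrite ?sqrrN.
  have {}bE : v 0%N * (2 * zcoord a (s 0%N) (t 0%N) - a) = b.
    by rewrite bE b_branch_reflection.
  have dj_neq0 : s j ^+ 2 - t j ^+ 2 != 0.
    by apply: contra vj_neq0 => /eqP dj0; rewrite vjE dj0 mulr0 invr0 mulr0.
  have bjE : v j * (2 * zcoord a (s j) (t j) - a) = b.
    rewrite -bE; apply: scaled_zcoord_double_eq => //.
    rewrite vjE v0E; field; by rewrite dj_neq0 t0_neq0.
  exists (origin_persp_mx (2 / b) (- a / b)); rewrite !Bpt_homothety.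
  split; [exact: reflection_persp_collineation| | exact: coll_maps_reflection ..].
  have -> : (0, b) = homothety (0, 0) (b / a) (0, a).
    by rewrite homothety0E /= mulr0 divfK.
  apply: coll_maps_reflection => //=; field; exact: a_neq0.
- case=> -> _ tjE.
  have tj2 : t j ^+ 2 = s j ^+ 2 - s 0%N ^+ 2 + t 0%N ^+ 2.
    rewrite tjE sqr_sqrtr //; apply: ltW; by rewrite -sqrtr_gt0 -tjE.
  have zjE : zcoord a (s j) (t j) = zcoord a (s 0%N) (t 0%N).
    by apply: zcoord_eq; rewrite tj2; ring.
  rewrite !Bpt_homothety /= zjE.
  by split=> //; split=> //=; rewrite ?zjE //; exact: collinear3_homothety.
Qed.
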